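(* Let $X,X'$ be i.i.d. random vectors in $\mathbb{R}^m$ and $Y,Y'$ i.i.d. random vectors in $\mathbb{R}^n$ (with $X,Y$ defined on a common probability space). Let $\mu,\nu$ be symmetric Lévy measures on $\mathbb{R}^m\setminus\{0\}$ and $\mathbb{R}^n\setminus\{0\}$ with full support and $\Phi(x)=\int(1-\cos\langle x,s\rangle)\mu(ds)$, $\Psi(y)=\int(1-\cos\langle y,t\rangle)\nu(dt)$. Then $$V^2(X,Y)\le\mathbb{E}\Phi(X-X')\cdot\mathbb{E}\Psi(Y-Y')\le16\,\mathbb{E}\Phi(X)\cdot\mathbb{E}\Psi(Y).$$
   Context: Symmetric Lévy measure on $\mathbb{R}^d\setminus\{0\}$: $\rho(B)=\rho(-B)$ and $\int(1\wedge|r|^2)\rho(dr)<\infty$; full support: positive mass on every nonempty open subset. $V^2(X,Y)=\iint|f_{(X,Y)}(s,t)-f_X(s)f_Y(t)|^2\,\mu(ds)\,\nu(dt)$, $f$ denoting characteristic functions. *)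

From HB Require Import structures.
From mathcomp Require Import all_boot all_order all_algebra.
From mathcomp Require Import all_classical all_reals all_analysis.
Set Implicit Arguments. Unset Strict Implicit. Unset Printing Implicit Defensive.
Import Order.TTheory GRing.Theory Num.Theory.
Local Open Scope classical_set_scope.
Local Open Scope ring_scope.

(* R^d is represented by d.-tuple R, equipped with the library's product
   sigma-algebra (generated by the coordinates), i.e. the Borel sets of R^d. *)
Section vectors.
Variables (R : realType) (d : nat).
Definition vzero : d.-tuple R := [tuple (0 : R) | i < d].
Definition vsub (x y : d.-tuple R) : d.-tuple R := [tuple tnth x i - tnth y i | i < d].
Definition vopp (x : d.-tuple R) : d.-tuple R := [tuple - tnth x i | i < d].
Definition vdot (x y : d.-tuple R) : R := \sum_(i < d) tnth x i * tnth y i.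
Definition vnorm2 (x : d.-tuple R) : R := \sum_(i < d) tnth x i ^+ 2.
Definition eopen (U : set (d.-tuple R)) : Prop :=
  forall x, U x -> exists2 e : R, 0 < e & forall y, vnorm2 (vsub y x) < e ^+ 2 -> U y.
End vectors.

Local Open Scope ereal_scope.

(* A symmetric Levy measure on R^d \ {0} with full support, viewed as a measure
   on R^d without mass at the origin. *)
Definition sym_levy_full (R : realType) (d : nat)
  (mu : {measure set (d.-tuple R) -> \bar R}) : Prop :=
  [/\ mu [set vzero R d] = 0,
      (forall B, measurable B -> mu B = mu (@vopp R d @` B)),
      \int[mu]_r (Num.min 1 (vnorm2 r))%:E < +oo &
      (forall U, eopen U -> U `<=` ~` [set vzero R d] -> U !=set0 -> 0 < mu U)].

Definition levy_phi (R : realType) (d : nat)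
  (mu : {measure set (d.-tuple R) -> \bar R}) (x : d.-tuple R) : \bar R :=
  \int[mu]_s (1 - cos (vdot x s))%:E.

Section rv.
Variables (dO : measure_display) (O : measurableType dO) (R : realType)
  (P : probability O R).

Definition indep2 (m n : nat) (X : O -> m.-tuple R) (Z : O -> n.-tuple R) : Prop :=
  forall A B, measurable A -> measurable B ->
    P (X @^-1` A `&` Z @^-1` B) = P (X @^-1` A) * P (Z @^-1` B).

Definition same_law (m : nat) (X Z : O -> m.-tuple R) : Prop :=
  forall A, measurable A -> P (X @^-1` A) = P (Z @^-1` A).

Definition cf_re (m : nat) (X : O -> m.-tuple R) (s : m.-tuple R) : R :=
  Rintegral P setT (fun w => cos (vdot s (X w))).
Definition cf_im (m : nat) (X : O -> m.-tuple R) (s : m.-tuple R) : R :=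
  Rintegral P setT (fun w => sin (vdot s (X w))).
Definition jcf_re (m n : nat) (X : O -> m.-tuple R) (Y : O -> n.-tuple R)
  (s : m.-tuple R) (t : n.-tuple R) : R :=
  Rintegral P setT (fun w => cos (vdot s (X w) + vdot t (Y w))).
Definition jcf_im (m n : nat) (X : O -> m.-tuple R) (Y : O -> n.-tuple R)
  (s : m.-tuple R) (t : n.-tuple R) : R :=
  Rintegral P setT (fun w => sin (vdot s (X w) + vdot t (Y w))).

(* |f_{(X,Y)}(s,t) - f_X(s) f_Y(t)|^2, written with real/imaginary parts *)
Definition cf_gap2 (m n : nat) (X : O -> m.-tuple R) (Y : O -> n.-tuple R)
  (s : m.-tuple R) (t : n.-tuple R) : R :=
  let a := cf_re X s in let b := cf_im X s in
  let c := cf_re Y t in let e := cf_im Y t in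
  ((jcf_re X Y s t - (a * c - b * e)) ^+ 2 + (jcf_im X Y s t - (a * e + b * c)) ^+ 2)%R.

Definition dcov2 (m n : nat) (mu : {measure set (m.-tuple R) -> \bar R})
  (nu : {measure set (n.-tuple R) -> \bar R})
  (X : O -> m.-tuple R) (Y : O -> n.-tuple R) : \bar R :=
  \int[mu]_s \int[nu]_t (cf_gap2 X Y s t)%:E.
End rv.

From HB Require Import structures.
From mathcomp Require Import all_boot all_order all_algebra.
From mathcomp Require Import all_classical all_reals all_analysis.
From mathcomp Require Import measurable_realfun ring lra.
Import Order.TTheory GRing.Theory Num.Theory.
Set Implicit Arguments. Unset Strict Implicit. Unset Printing Implicit Defensive.
Local Open Scope classical_set_scope.
Local Open Scope ring_scope.

(* Write [U = exp (i <s, X>)] and [V = exp (i <t, Y>)].  Then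
   [f_(X,Y)(s,t) - f_X(s) f_Y(t)] is the covariance of [U] and [V], so by
   Cauchy-Schwarz its squared modulus is at most [Var U * Var V]
   [= (1 - |f_X(s)|^2) (1 - |f_Y(t)|^2)].  For an independent copy [X'] of [X],
   [1 - |f_X(s)|^2 = E (1 - cos <s, X - X'>)], so integrating in [s] against
   [mu] gives [E Phi(X - X')] by Tonelli (a Levy measure is sigma-finite); the
   same holds for [Y], which proves the first inequality.  The second follows
   from [1 - cos (a - b) <= 2 (1 - cos a) + 2 (1 - cos b)], which gives
   [Phi(x - y) <= 2 Phi(x) + 2 Phi(y)], hence [E Phi(X - X') <= 4 E Phi(X)]. *)

Section euclidean.
Variables (R : realType) (d : nat).
Implicit Types x y s : d.-tuple R.

Lemma vdotC x y : vdot x y = vdot y x.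
Proof. by apply: eq_bigr => i _; rewrite mulrC. Qed.

Lemma vdot_subl x y s : vdot (vsub x y) s = vdot x s - vdot y s.
Proof. by rewrite /vdot -sumrB; apply: eq_bigr => i _; rewrite tnth_mktuple mulrBl. Qed.

Lemma vnorm2_ge0 x : 0 <= vnorm2 x.
Proof. by apply: sumr_ge0 => i _; exact: sqr_ge0. Qed.

Lemma vnorm2_eq0 x : vnorm2 x = 0 -> x = vzero R d.
Proof.
move=> /eqP; rewrite psumr_eq0 => [/allP x0|i _]; last exact: sqr_ge0.
apply: eq_from_tnth => i; rewrite tnth_mktuple.
by have := x0 i (mem_index_enum i); rewrite /= sqrf_eq0 => /eqP.
Qed.

Lemma measurable_vdot dA (A : measurableType dA) (f g : A -> d.-tuple R) :
  measurable_fun setT f -> measurable_fun setT g ->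
  measurable_fun setT (fun a => vdot (f a) (g a)).
Proof.
move=> mf mg; apply: measurable_sum => i; apply: measurable_funM.
- exact: measurableT_comp (measurable_tnth i) mf.
- exact: measurableT_comp (measurable_tnth i) mg.
Qed.

Lemma measurable_vdotl dA (A : measurableType dA) (f : A -> d.-tuple R) s :
  measurable_fun setT f -> measurable_fun setT (fun a => vdot s (f a)).
Proof. by move=> mf; apply: measurable_vdot => //; exact: measurable_cst. Qed.

Lemma measurable_vnorm2 : measurable_fun setT (@vnorm2 R d).
Proof. by apply: measurable_sum => i; apply: measurable_funX; exact: measurable_tnth. Qed.

Lemma measurable_set_vzero : measurable [set vzero R d].
Proof.
have -> : [set vzero R d] = (@vnorm2 R d) @^-1` [set 0].
  apply/seteqP; split => [_ -> | x /vnorm2_eq0 //].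
  by rewrite /= /vnorm2 big1 // => i _; rewrite tnth_mktuple expr0n.
by rewrite -[X in measurable X]setTI; exact: measurable_vnorm2 _ (measurable_set1 _).
Qed.

End euclidean.

Lemma measurable_cos (R : realType) : measurable_fun setT (@cos R).
Proof. exact: continuous_measurable_fun (@continuous_cos R). Qed.

Lemma measurable_sin (R : realType) : measurable_fun setT (@sin R).
Proof. exact: continuous_measurable_fun (@continuous_sin R). Qed.

Lemma one_sub_cos_ge0 (R : realType) (x : R) : (0 <= (1 - cos x)%:E)%E.
Proof. by rewrite lee_fin subr_ge0 cos_le1. Qed.

Lemma measurable_one_sub_cos d (T : measurableType d) (R : realType) (h : T -> R) :
  measurable_fun setT h -> measurable_fun setT (fun x => (1 - cos (h x))%:E).
Proof.
move=> mh; apply/measurable_EFinP; apply: measurable_funB; first exact: measurable_cst.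
exact: measurableT_comp (@measurable_cos R) mh.
Qed.

Section sigma_finite_levy.
Local Open Scope ereal_scope.
Variables (R : realType) (d : nat) (mu : {measure set (d.-tuple R) -> \bar R}).

(* Each set [{r | 1/(k+1) <= min(1, |r|^2)}] has finite mass by Markov's
   inequality, and together with the origin they cover R^d. *)
Lemma sigma_finite_of_integrable_min1_vnorm2 :
  mu [set vzero R d] < +oo -> \int[mu]_r (Num.min 1 (vnorm2 r))%:E < +oo ->
  sigma_finite setT mu.
Proof.
move=> mu0 Ifin.
have m0 : measurable [set vzero R d] by exact: measurable_set_vzero.
pose g (r : d.-tuple R) := (Num.min 1 (vnorm2 r))%:E.
have mg : measurable_fun setT g.
  apply/measurable_EFinP; apply: (measurable_minr (f := cst 1%R)) => //.
  exact: measurable_vnorm2.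
have g0 r : 0 <= g r by rewrite lee_fin le_min ler01 vnorm2_ge0.
pose A k := [set r | ((k.+1)%:R^-1)%:E <= `|g r|].
have mA k : measurable (A k).
  by rewrite -[A k]setTI; apply: emeasurable_fun_c_infty => //; exact: measurableT_comp.
exists (fun k => A k `|` [set vzero R d]).
  apply/seteqP; split => [r _|//].
  have [->|r0] := eqVneq r (vzero R d); first by exists 0%N => //; right.
  have gr0 : (0 < Num.min 1 (vnorm2 r))%R.
    rewrite lt_min ltr01 lt_neqAle vnorm2_ge0 andbT eq_sym.
    by apply: contra_neq r0; exact: vnorm2_eq0.
  exists (Num.trunc (Num.min 1 (vnorm2 r))^-1)%R => //; left.
  rewrite /A /= lee_fin ger0_norm ?(ltW gr0) //.
  rewrite -[leRHS]invrK lef_pV2 ?posrE ?invr_gt0 //.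
  exact/ltW/truncnS_gt.
move=> k; split; first exact: measurableU.
rewrite (le_lt_trans (measureU2 mu (mA k) m0)) // lte_add_pinfty //.
have Ig : \int[mu]_r `|g r| < +oo.
  by under eq_integral do rewrite gee0_abs //; exact: Ifin.
have : ((k.+1)%:R^-1)%:E * mu (A k) < +oo.
  by apply: le_lt_trans Ig; rewrite -[A k]setTI; exact: le_integral_abse.
by rewrite ltey; apply: contraTneq => ->; rewrite mulry gtr0_sg ?invr_gt0 // mul1e ltxx.
Qed.

End sigma_finite_levy.

(* The integral of a nonnegative function is a supremum over the simple
   functions below it, so monotonicity needs no measurability. *)
Lemma ge0_le_integral_nonmeasurable d (T : measurableType d) (R : realType)
    (mu : {measure set T -> \bar R}) (f g : T -> \bar R) :
  (forall x, 0 <= f x)%E -> (forall x, f x <= g x)%E ->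
  (\int[mu]_x f x <= \int[mu]_x g x)%E.
Proof.
move=> f0 fg; have g0 x : (0 <= g x)%E by exact: le_trans (f0 x) (fg x).
rewrite !ge0_integralTE //; apply: ge_ereal_sup => _ [h hf <-].
by apply: ereal_sup_ubound; exists h => // x; exact: le_trans (hf x) (fg x).
Qed.

Section bounded_measurable.
Variables (d : measure_display) (T : measurableType d) (R : realType).
Implicit Types f g : T -> R.

Definition bounded_measurable f :=
  measurable_fun setT f /\ exists M : R, forall x, `|f x| <= M.

Lemma bounded_measurable_cst k : bounded_measurable (fun _ => k).
Proof. by split; [exact: measurable_cst | exists `|k|]. Qed.

Lemma bounded_measurableD f g : bounded_measurable f -> bounded_measurable g ->
  bounded_measurable (fun x => f x + g x).
Proof.
case=> mf [M fM] [mg [N gN]]; split; first exact: measurable_funD.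
by exists (M + N) => x; exact: le_trans (ler_normD _ _) (lerD (fM x) (gN x)).
Qed.

Lemma bounded_measurableB f g : bounded_measurable f -> bounded_measurable g ->
  bounded_measurable (fun x => f x - g x).
Proof.
case=> mf [M fM] [mg [N gN]]; split; first exact: measurable_funB.
by exists (M + N) => x; exact: le_trans (ler_normB _ _) (lerD (fM x) (gN x)).
Qed.

Lemma bounded_measurableM f g : bounded_measurable f -> bounded_measurable g ->
  bounded_measurable (fun x => f x * g x).
Proof.
case=> mf [M fM] [mg [N gN]]; split; first exact: measurable_funM.
by exists (M * N) => x; rewrite normrM; exact: ler_pM.
Qed.

Lemma bounded_measurable_cos h : measurable_fun setT h ->
  bounded_measurable (fun x => cos (h x)).
Proof.
split; first exact: measurableT_comp (@measurable_cos R) _.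
by exists 1 => x; rewrite ler_norml cos_le1 cos_geN1.
Qed.

Lemma bounded_measurable_sin h : measurable_fun setT h ->
  bounded_measurable (fun x => sin (h x)).
Proof.
split; first exact: measurableT_comp (@measurable_sin R) _.
by exists 1 => x; rewrite ler_norml sin_le1 sin_geN1.
Qed.

Lemma bounded_measurable_integrable (mu : {measure set T -> \bar R}) f :
  (mu setT < +oo)%E -> bounded_measurable f -> mu.-integrable setT (EFin \o f).
Proof.
move=> muT [mf [M fM]]; apply: measurable_bounded_integrable => //.
exists M; split; first exact: num_real.
by move=> y My x _; exact: le_trans (fM x) (ltW My).
Qed.

End bounded_measurable.

Lemma bounded_measurable_comp d d' (T : measurableType d) (T' : measurableType d')
    (R : realType) (f : T' -> R) (h : T -> T') :
  bounded_measurable f -> measurable_fun setT h -> bounded_measurable (fun x => f (h x)).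
Proof.
by case=> mf [M fM] mh; split; [exact: measurableT_comp mf mh | exists M].
Qed.

(* [bounded_measurableB] comes first: [f x - g x] also matches [_ + _]. *)
Ltac bounded_measurable :=
  repeat first [ assumption | apply: bounded_measurable_cst
    | apply: bounded_measurableB | apply: bounded_measurableD
    | apply: bounded_measurableM ].

Lemma probability_setT_lty d (T : measurableType d) (R : realType) (P : probability T R) :
  (P setT < +oo)%E.
Proof. by rewrite probability_setT ltry. Qed.

Section bounded_expectation.
Variables (d : measure_display) (T : measurableType d) (R : realType)
  (P : probability T R).
Implicit Types f g : T -> R.
Local Notation E f := (Rintegral P setT f).
Local Notation bm := (@bounded_measurable _ T R).

Let bm_integrable f : bm f -> P.-integrable setT (EFin \o f).
Proof. exact/bounded_measurable_integrable/probability_setT_lty. Qed.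

Lemma Rintegral_boundedD f g : bm f -> bm g -> E (fun x => f x + g x) = E f + E g.
Proof. by move=> /bm_integrable fi /bm_integrable gi; rewrite RintegralD. Qed.

Lemma Rintegral_boundedB f g : bm f -> bm g -> E (fun x => f x - g x) = E f - E g.
Proof. by move=> /bm_integrable fi /bm_integrable gi; rewrite RintegralB. Qed.

Lemma Rintegral_boundedZl k f : bm f -> E (fun x => k * f x) = k * E f.
Proof. by move=> /bm_integrable fi; rewrite RintegralZl. Qed.

Lemma Rintegral_probability_cst k : E (fun _ => k) = k.
Proof.
rewrite Rintegral_cst //; transitivity (k * fine (1%E : \bar R)); last by rewrite mulr1.
by congr (_ * fine _); exact: probability_setT.
Qed.

Lemma le_Rintegral_bounded f g : bm f -> bm g -> (forall x, f x <= g x) -> E f <= E g.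
Proof. by move=> /bm_integrable fi /bm_integrable gi fg; exact: le_Rintegral. Qed.

Lemma integral_bounded_EFin f : bm f -> (\int[P]_x (f x)%:E)%E = (E f)%:E.
Proof. by move=> /bm_integrable fi; rewrite /Rintegral fineK // integrable_fin_num. Qed.

Lemma Rintegral_centeredM f g : bm f -> bm g ->
  E (fun x => (f x - E f) * (g x - E g)) = E (fun x => f x * g x) - E f * E g.
Proof.
move=> bf bg.
transitivity (E (fun x => f x * g x + ((- E g) * f x + ((- E f) * g x + E f * E g)))).
  by apply: eq_Rintegral => x _; ring.
rewrite !Rintegral_boundedD; try by bounded_measurable.
by rewrite Rintegral_probability_cst !Rintegral_boundedZl //; ring.
Qed.

Lemma Rintegral_centered_norm2 f g : bm f -> bm g ->
    (forall x, f x ^+ 2 + g x ^+ 2 = 1) ->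
  E (fun x => (f x - E f) ^+ 2 + (g x - E g) ^+ 2) = 1 - E f ^+ 2 - E g ^+ 2.
Proof.
move=> bf bg fg1.
have var h : bm h -> E (fun x => (h x - E h) ^+ 2) = E (fun x => h x ^+ 2) - E h ^+ 2.
  by move=> bh; exact: Rintegral_centeredM.
rewrite Rintegral_boundedD; try by bounded_measurable.
rewrite !var // addrACA -Rintegral_boundedD; try by bounded_measurable.
under eq_Rintegral do rewrite fg1.
by rewrite Rintegral_probability_cst addrA.
Qed.

End bounded_expectation.

Lemma le_mul_of_quadratic (R : realFieldType) (c A B : R) : 0 <= A -> 0 <= B ->
  (forall k, 0 < k -> 2 * k * c <= c * A + k ^+ 2 * B) -> c <= A * B.
Proof.
move=> A0 B0 quad; have [Apos|] := ltP 0 A.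
  have := quad A Apos; nra.
(* If [A = 0], the choice [k = c / (B + 1)] gives [2 k c <= k^2 B < k c]. *)
move=> Ale0; have A00 : A = 0 by apply/eqP; rewrite eq_le Ale0 A0.
rewrite {}A00 in quad *; rewrite mul0r leNgt; apply/negP => c0.
have k0 : 0 < c / (B + 1) by rewrite divr_gt0 // ltr_wpDl.
have kB : c / (B + 1) * B = c - c / (B + 1) by field; rewrite lt0r_neq0 // ltr_wpDl.
have := quad _ k0; rewrite mulr0 add0r; nra.
Qed.

Section cauchy_schwarz.
Variables (d : measure_display) (T : measurableType d) (R : realType)
  (P : probability T R).
Local Notation E f := (Rintegral P setT f).

Lemma Rintegral_complex_cauchy_schwarz (u1 u2 v1 v2 : T -> R) :
  bounded_measurable u1 -> bounded_measurable u2 ->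
  bounded_measurable v1 -> bounded_measurable v2 ->
  E (fun x => u1 x * v1 x - u2 x * v2 x) ^+ 2 +
  E (fun x => u1 x * v2 x + u2 x * v1 x) ^+ 2 <=
  E (fun x => u1 x ^+ 2 + u2 x ^+ 2) * E (fun x => v1 x ^+ 2 + v2 x ^+ 2).
Proof.
move=> b1 b2 b3 b4.
set a := E (fun x => _ - _); set b := E (fun x => _ + u2 x * v1 x).
apply: le_mul_of_quadratic => [||k _].
- by apply: Rintegral_ge0 => x _; rewrite addr_ge0 ?sqr_ge0.
- by apply: Rintegral_ge0 => x _; rewrite addr_ge0 ?sqr_ge0.
set c := a ^+ 2 + b ^+ 2.
have -> : 2 * k * c = E (fun x => (2 * k * a) * (u1 x * v1 x - u2 x * v2 x)
                                + (2 * k * b) * (u1 x * v2 x + u2 x * v1 x)).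
  rewrite [RHS]Rintegral_boundedD; try by bounded_measurable.
  rewrite !Rintegral_boundedZl; try by bounded_measurable.
  by rewrite -/a -/b /c; ring.
have -> : c * E (fun x => u1 x ^+ 2 + u2 x ^+ 2) +
          k ^+ 2 * E (fun x => v1 x ^+ 2 + v2 x ^+ 2) =
          E (fun x => c * (u1 x ^+ 2 + u2 x ^+ 2) + k ^+ 2 * (v1 x ^+ 2 + v2 x ^+ 2)).
  rewrite [RHS]Rintegral_boundedD; try by bounded_measurable.
  by rewrite !Rintegral_boundedZl //; bounded_measurable.
apply: le_Rintegral_bounded; try by bounded_measurable.
(* [z1 + i z2] is [conj (a + i b) * (u1 + i u2)] and the slack below is
   [|z - k * conj v|^2 >= 0]. *)
move=> x; set z1 := a * u1 x + b * u2 x; set z2 := a * u2 x - b * u1 x.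
rewrite -subr_ge0 (_ : _ - _ = (z1 - k * v1 x) ^+ 2 + (z2 + k * v2 x) ^+ 2).
  by rewrite addr_ge0 ?sqr_ge0.
by rewrite /z1 /z2 /c; ring.
Qed.

Lemma Rintegral_complex_covariance_le (u1 u2 v1 v2 : T -> R) :
  bounded_measurable u1 -> bounded_measurable u2 ->
  bounded_measurable v1 -> bounded_measurable v2 ->
  (forall x, u1 x ^+ 2 + u2 x ^+ 2 = 1) -> (forall x, v1 x ^+ 2 + v2 x ^+ 2 = 1) ->
  (E (fun x => u1 x * v1 x - u2 x * v2 x) - (E u1 * E v1 - E u2 * E v2)) ^+ 2 +
  (E (fun x => u1 x * v2 x + u2 x * v1 x) - (E u1 * E v2 + E u2 * E v1)) ^+ 2 <=
  (1 - E u1 ^+ 2 - E u2 ^+ 2) * (1 - E v1 ^+ 2 - E v2 ^+ 2).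
Proof.
move=> bu1 bu2 bv1 bv2 u_unit v_unit.
have centered f : bounded_measurable f -> bounded_measurable (fun x => f x - E f).
  by move=> bf; bounded_measurable.
have := Rintegral_complex_cauchy_schwarz (centered _ bu1) (centered _ bu2)
  (centered _ bv1) (centered _ bv2).
rewrite !Rintegral_centered_norm2 //.
rewrite !(Rintegral_boundedB, Rintegral_boundedD); try by bounded_measurable.
rewrite !Rintegral_centeredM //.
by move=> cauchy_schwarz; nra.
Qed.

End cauchy_schwarz.

(* [1 - |f_X(s)|^2], the variance of [exp (i <s, X>)]. *)
Definition cf_var dO (O : measurableType dO) (R : realType) (P : probability O R)
  (m : nat) (X : O -> m.-tuple R) (s : m.-tuple R) : R :=
  1 - cf_re P X s ^+ 2 - cf_im P X s ^+ 2.

Lemma cf_gap2_le_cf_var dO (O : measurableType dO) (R : realType)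
    (P : probability O R) (m n : nat) (X : O -> m.-tuple R) (Y : O -> n.-tuple R)
    s t :
  measurable_fun setT X -> measurable_fun setT Y ->
  cf_gap2 P X Y s t <= cf_var P X s * cf_var P Y t.
Proof.
move=> /(measurable_vdotl s) msX /(measurable_vdotl t) mtY; rewrite /cf_gap2 /=.
have -> : jcf_re P X Y s t = Rintegral P setT (fun w =>
    cos (vdot s (X w)) * cos (vdot t (Y w)) - sin (vdot s (X w)) * sin (vdot t (Y w))).
  by apply: eq_Rintegral => w _; rewrite cosD.
have -> : jcf_im P X Y s t = Rintegral P setT (fun w =>
    cos (vdot s (X w)) * sin (vdot t (Y w)) + sin (vdot s (X w)) * cos (vdot t (Y w))).
  by apply: eq_Rintegral => w _; rewrite sinD addrC.
apply: Rintegral_complex_covariance_le => [||||w|w]; rewrite ?cos2Dsin2 //.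
- exact: bounded_measurable_cos.
- exact: bounded_measurable_sin.
- exact: bounded_measurable_cos.
- exact: bounded_measurable_sin.
Qed.

Lemma integral_distribution_bounded d d' (T : measurableType d) (T' : measurableType d')
    (R : realType) (P : probability T R) (Y : {RV P >-> T'}) (f : T' -> R) :
  bounded_measurable f ->
  (\int[P]_w (f (Y w))%:E = \int[distribution P Y]_y (f y)%:E)%E.
Proof.
move=> bf; rewrite integral_distribution //; first by case: bf => /measurable_EFinP.
apply: bounded_measurable_integrable; first exact: probability_setT_lty.
exact: bounded_measurable_comp.
Qed.

Section law_and_independence.
Variables (dO : measure_display) (O : measurableType dO) (R : realType)
  (P : probability O R) (m n : nat) (X X' : O -> m.-tuple R) (Z : O -> n.-tuple R).
Hypotheses (mX : measurable_fun setT X) (mX' : measurable_fun setT X')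
  (mZ : measurable_fun setT Z).
Local Notation E f := (Rintegral P setT f).

Let XZ w := (X w, Z w).
Let mXZ : measurable_fun setT XZ. Proof. exact: measurable_fun_pair. Qed.
HB.instance Definition _ := @isMeasurableFun.Build _ _ _ _ X mX.
HB.instance Definition _ := @isMeasurableFun.Build _ _ _ _ X' mX'.
HB.instance Definition _ := @isMeasurableFun.Build _ _ _ _ Z mZ.
HB.instance Definition _ := @isMeasurableFun.Build _ _ _ _ XZ mXZ.

Lemma same_law_ge0_integral (f : m.-tuple R -> \bar R) : same_law P X X' ->
  measurable_fun setT f -> (forall x, (0 <= f x)%E) ->
  (\int[P]_w f (X' w) = \int[P]_w f (X w))%E.
Proof.
move=> lX mf f0.
rewrite -(ge0_integral_distribution X' mf f0) -(ge0_integral_distribution X mf f0).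
by apply: eq_measure_integral => A mA _; symmetry; exact: lX.
Qed.

Lemma same_law_Rintegral (f : m.-tuple R -> R) : same_law P X X' ->
  bounded_measurable f -> E (fun w => f (X' w)) = E (fun w => f (X w)).
Proof.
move=> lX bf; rewrite /Rintegral !(integral_distribution_bounded _ bf).
by congr fine; apply: eq_measure_integral => A mA _; symmetry; exact: lX.
Qed.

Lemma indep2_distribution_pair A : indep2 P X Z -> measurable A ->
  (distribution P X \x distribution P Z)%E A = distribution P XZ A.
Proof.
by move=> iXZ; apply: product_measure_unique => A1 B1 mA1 mB1; exact: iXZ.
Qed.

Lemma indep2_RintegralM (f : m.-tuple R -> R) (g : n.-tuple R -> R) : indep2 P X Z ->
  bounded_measurable f -> bounded_measurable g ->
  E (fun w => f (X w) * g (Z w)) = E (fun w => f (X w)) * E (fun w => g (Z w)).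
Proof.
move=> iXZ bf bg; pose h p := f p.1 * g p.2.
have bh : bounded_measurable h.
  by apply: bounded_measurableM; apply: bounded_measurable_comp.
have hint : (distribution P X \x distribution P Z)%E.-integrable setT (EFin \o h).
  exact: bounded_measurable_integrable (probability_setT_lty _) bh.
have gint : (distribution P Z).-integrable setT (EFin \o g).
  exact: bounded_measurable_integrable (probability_setT_lty _) bg.
apply: EFin_inj; rewrite EFinM -!integral_bounded_EFin;
  try by [exact: bounded_measurable_comp | exact: bounded_measurable_comp bh mXZ].
rewrite -[LHS]/(\int[P]_w (h (XZ w))%:E)%E integral_distribution_bounded //.
rewrite (eq_measure_integral (distribution P X \x distribution P Z)%E); last first.
  by move=> A mA _; apply/esym/indep2_distribution_pair.
rewrite -(integral12_prod_meas1 hint).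
transitivity (\int[distribution P X]_x ((f x)%:E * \int[distribution P Z]_y (g y)%:E))%E.
  by apply: eq_integral => x _; rewrite -integralZl.
rewrite -(fineK (integrable_fin_num measurableT gint)) integralZr // ?fineK.
- by rewrite !integral_distribution_bounded.
- exact: integrable_fin_num.
- exact: bounded_measurable_integrable (probability_setT_lty _) bf.
Qed.

End law_and_independence.

Lemma cf_var_iid dO (O : measurableType dO) (R : realType) (P : probability O R)
    (m : nat) (X X' : O -> m.-tuple R) s :
  measurable_fun setT X -> measurable_fun setT X' ->
  indep2 P X X' -> same_law P X X' ->
  (cf_var P X s)%:E = (\int[P]_w (1 - cos (vdot (vsub (X w) (X' w)) s))%:E)%E.
Proof.
move=> mX mX' iX lX.
have msx : measurable_fun setT (fun x : m.-tuple R => vdot s x).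
  exact: measurable_vdotl.
have bc := bounded_measurable_cos msx; have bs := bounded_measurable_sin msx.
have bcX := bounded_measurable_comp bc mX; have bcX' := bounded_measurable_comp bc mX'.
have bsX := bounded_measurable_comp bs mX; have bsX' := bounded_measurable_comp bs mX'.
transitivity (\int[P]_w (1 - (cos (vdot s (X w)) * cos (vdot s (X' w)) +
                            sin (vdot s (X w)) * sin (vdot s (X' w))))%:E)%E; last first.
  by apply: eq_integral => w _; rewrite vdot_subl (vdotC (X w)) (vdotC (X' w)) cosB.
rewrite integral_bounded_EFin; last by bounded_measurable.
congr EFin.
rewrite Rintegral_boundedB; try by bounded_measurable.
rewrite Rintegral_boundedD; try by bounded_measurable.
rewrite Rintegral_probability_cst.
rewrite (indep2_RintegralM mX mX' iX bc bc) (indep2_RintegralM mX mX' iX bs bs).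
rewrite (same_law_Rintegral mX mX' lX bc) (same_law_Rintegral mX mX' lX bs).
by rewrite /cf_var -!expr2 opprD addrA.
Qed.

Lemma cf_var_ge0 dO (O : measurableType dO) (R : realType) (P : probability O R)
    (m : nat) (X : O -> m.-tuple R) s :
  measurable_fun setT X -> 0 <= cf_var P X s.
Proof.
move=> /(measurable_vdotl s) msX; rewrite /cf_var -Rintegral_centered_norm2.
- by apply: Rintegral_ge0 => w _; rewrite addr_ge0 ?sqr_ge0.
- exact: bounded_measurable_cos.
- exact: bounded_measurable_sin.
- by move=> w; rewrite cos2Dsin2.
Qed.

(* [mu] itself, carrying the sigma-finite structure that Fubini's theorem needs. *)
Section sigma_finite_copy.
Variables (d : measure_display) (T : measurableType d) (R : realType)
  (mu : {measure set T -> \bar R}) (mu_sf : sigma_finite setT mu).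

Definition sigma_finite_copy of sigma_finite setT mu : set T -> \bar R := mu.
HB.instance Definition _ := Measure.on (sigma_finite_copy mu_sf).
HB.instance Definition _ :=
  Measure_isSigmaFinite.Build _ _ _ (sigma_finite_copy mu_sf) mu_sf.

End sigma_finite_copy.

Section cf_var_fubini.
Local Open Scope ereal_scope.
Variables (dO : measure_display) (O : measurableType dO) (R : realType)
  (P : probability O R) (m : nat) (X X' : O -> m.-tuple R).
Hypotheses (mX : measurable_fun setT X) (mX' : measurable_fun setT X')
  (iX : indep2 P X X') (lX : same_law P X X').

Let phase_gap (p : O * m.-tuple R) : \bar R :=
  (1 - cos (vdot (vsub (X p.1) (X' p.1)) p.2))%:E.

Let measurable_phase_gap : measurable_fun setT phase_gap.
Proof.
rewrite /phase_gap; under eq_fun do rewrite vdot_subl.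
apply: measurable_one_sub_cos; apply: measurable_funB;
  by apply: measurable_vdot => //; exact: measurableT_comp.
Qed.

Let phase_gap_ge0 p : 0 <= phase_gap p.
Proof. exact: one_sub_cos_ge0. Qed.

Lemma measurable_cf_var : measurable_fun setT (cf_var P X).
Proof.
apply/measurable_EFinP; rewrite (_ : EFin \o _ = fubini_G P phase_gap).
  exact: measurable_fun_fubini_tonelli_G.
by apply/funext => s; rewrite /fubini_G /= (cf_var_iid s mX mX' iX lX).
Qed.

Variables (mu : {measure set (m.-tuple R) -> \bar R}) (mu_sf : sigma_finite setT mu).

Lemma integral_cf_var :
  \int[mu]_s (cf_var P X s)%:E = \int[P]_w levy_phi mu (vsub (X w) (X' w)).
Proof.
transitivity (\int[sigma_finite_copy mu_sf]_s \int[P]_w phase_gap (w, s)).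
  by apply: eq_integral => s _; rewrite (cf_var_iid s mX mX' iX lX).
exact: (esym (fubini_tonelli phase_gap measurable_phase_gap phase_gap_ge0)).
Qed.

End cf_var_fubini.

Lemma one_sub_cos_sub_le (R : realType) (a b : R) :
  1 - cos (a - b) <= 2 * (1 - cos a) + 2 * (1 - cos b).
Proof.
rewrite cosB -subr_ge0.
have -> : 2 * (1 - cos a) + 2 * (1 - cos b) - (1 - (cos a * cos b + sin a * sin b)) =
    ((sin a + sin b) ^+ 2 + (cos a + cos b - 2) ^+ 2) / 2 +
    ((1 - (cos a ^+ 2 + sin a ^+ 2)) + (1 - (cos b ^+ 2 + sin b ^+ 2))) / 2.
  by field.
by rewrite !cos2Dsin2 !subrr addr0 mul0r addr0 divr_ge0 // addr_ge0 ?sqr_ge0.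
Qed.

Section levy_phi.
Local Open Scope ereal_scope.
Variables (R : realType) (m : nat) (mu : {measure set (m.-tuple R) -> \bar R}).

Lemma levy_phi_ge0 x : 0 <= levy_phi mu x.
Proof. by apply: integral_ge0 => s _; exact: one_sub_cos_ge0. Qed.

Lemma levy_phi_vsub_le x y :
  levy_phi mu (vsub x y) <= 2%:E * levy_phi mu x + 2%:E * levy_phi mu y.
Proof.
have mphi (z : m.-tuple R) : measurable_fun setT (fun s => (1 - cos (vdot z s))%:E).
  by apply: measurable_one_sub_cos; apply: measurable_vdotl.
have m2phi (z : m.-tuple R) :
    measurable_fun setT (fun s => 2%:E * (1 - cos (vdot z s))%:E).
  by apply: measurable_funeM; exact: mphi.
rewrite /levy_phi -!ge0_integralZl_EFin //; try exact: mphi.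
rewrite -ge0_integralD //; try exact: m2phi.
apply: ge0_le_integral => //; first exact: emeasurable_funD.
by move=> s _; rewrite -!EFinM -EFinD lee_fin vdot_subl one_sub_cos_sub_le.
Qed.

Hypothesis mu_sf : sigma_finite setT mu.

Lemma measurable_levy_phi : measurable_fun setT (levy_phi mu).
Proof.
pose k (p : m.-tuple R * m.-tuple R) := (1 - cos (vdot p.1 p.2))%:E.
have mk : measurable_fun setT k.
  apply: measurable_one_sub_cos.
  by apply: measurable_vdot; [exact: measurable_fst | exact: measurable_snd].
exact: (measurable_fun_fubini_tonelli_F (m2 := sigma_finite_copy mu_sf) k mk
  (fun p => one_sub_cos_ge0 _)).
Qed.

Lemma integral_levy_phi_vsub_le dO (O : measurableType dO) (P : probability O R)
    (X X' : O -> m.-tuple R) :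
  measurable_fun setT X -> measurable_fun setT X' -> same_law P X X' ->
  \int[P]_w levy_phi mu (vsub (X w) (X' w)) <= 4%:E * \int[P]_w levy_phi mu (X w).
Proof.
move=> mX mX' lX.
have mphiX : measurable_fun setT (fun w => levy_phi mu (X w)).
  exact: measurableT_comp measurable_levy_phi mX.
have mphiX' : measurable_fun setT (fun w => levy_phi mu (X' w)).
  exact: measurableT_comp measurable_levy_phi mX'.
apply: le_trans (ge0_le_integral_nonmeasurable _ (fun w => levy_phi_ge0 _)
  (fun w => levy_phi_vsub_le (X w) (X' w))) _.
rewrite ge0_integralD //; try exact: measurable_funeM; last 2 first.
- by move=> w _; rewrite mule_ge0 ?levy_phi_ge0.
- by move=> w _; rewrite mule_ge0 ?levy_phi_ge0.
rewrite !ge0_integralZl_EFin //; try by move=> w _; exact: levy_phi_ge0.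
rewrite (same_law_ge0_integral mX mX' lX measurable_levy_phi levy_phi_ge0).
by rewrite -ge0_muleDl ?lee_fin // -EFinD -natrD.
Qed.

End levy_phi.

Lemma ge0_integral_integralM d1 d2 (T1 : measurableType d1) (T2 : measurableType d2)
    (R : realType) (mu : {measure set T1 -> \bar R}) (nu : {measure set T2 -> \bar R})
    (g : T1 -> R) (h : T2 -> R) :
  (forall s, 0 <= g s) -> (forall t, 0 <= h t) ->
  measurable_fun setT g -> measurable_fun setT h ->
  (\int[mu]_s \int[nu]_t (g s * h t)%:E =
   (\int[mu]_s (g s)%:E) * \int[nu]_t (h t)%:E)%E.
Proof.
move=> g0 h0 mg mh.
transitivity (\int[mu]_s ((g s)%:E * \int[nu]_t (h t)%:E))%E.
  apply: eq_integral => s _; under eq_integral do rewrite EFinM.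
  by apply: ge0_integralZl_EFin => // [t _|]; [rewrite lee_fin | exact/measurable_EFinP].
apply: ge0_integralZr => //; first exact/measurable_EFinP.
  by move=> s _; rewrite lee_fin.
by apply: integral_ge0 => t _; rewrite lee_fin.
Qed.

Lemma dcov2_le_integral_cf_var dO (O : measurableType dO) (R : realType)
    (P : probability O R) (m n : nat) (X : O -> m.-tuple R) (Y : O -> n.-tuple R)
    (mu : {measure set (m.-tuple R) -> \bar R})
    (nu : {measure set (n.-tuple R) -> \bar R}) :
  measurable_fun setT X -> measurable_fun setT Y ->
  measurable_fun setT (cf_var P X) -> measurable_fun setT (cf_var P Y) ->
  (dcov2 P mu nu X Y <=
   (\int[mu]_s (cf_var P X s)%:E) * \int[nu]_t (cf_var P Y t)%:E)%E.
Proof.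
move=> mX mY mcX mcY.
have gap_ge0 s t : (0 <= (cf_gap2 P X Y s t)%:E)%E.
  by rewrite lee_fin /cf_gap2 addr_ge0 ?sqr_ge0.
rewrite -ge0_integral_integralM // => [|s|t]; try exact: cf_var_ge0.
apply: ge0_le_integral_nonmeasurable => s; first exact: integral_ge0.
apply: ge0_le_integral_nonmeasurable => t //.
by rewrite lee_fin cf_gap2_le_cf_var.
Qed.

Lemma sym_levy_full_sigma_finite (R : realType) (d : nat)
    (mu : {measure set (d.-tuple R) -> \bar R}) :
  sym_levy_full mu -> sigma_finite setT mu.
Proof.
by case=> mu0 _ Ifin _; apply: sigma_finite_of_integrable_min1_vnorm2; rewrite ?mu0.
Qed.

Local Open Scope ereal_scope.

Theorem lemma3p6 (dO : measure_display) (O : measurableType dO) (R : realType)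
  (P : probability O R) (m n : nat)
  (X X' : O -> m.-tuple R) (Y Y' : O -> n.-tuple R)
  (mX : measurable_fun setT X) (mX' : measurable_fun setT X')
  (mY : measurable_fun setT Y) (mY' : measurable_fun setT Y')
  (iX : indep2 P X X') (lX : same_law P X X')
  (iY : indep2 P Y Y') (lY : same_law P Y Y')
  (mu : {measure set (m.-tuple R) -> \bar R})
  (nu : {measure set (n.-tuple R) -> \bar R})
  (hmu : sym_levy_full mu) (hnu : sym_levy_full nu) :
  dcov2 P mu nu X Y <=
    (\int[P]_w levy_phi mu (vsub (X w) (X' w))) *
    (\int[P]_w levy_phi nu (vsub (Y w) (Y' w)))
  /\
  (\int[P]_w levy_phi mu (vsub (X w) (X' w))) *
    (\int[P]_w levy_phi nu (vsub (Y w) (Y' w)))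
  <= 16%:E * ((\int[P]_w levy_phi mu (X w)) * (\int[P]_w levy_phi nu (Y w))).
Proof.
have mu_sf := sym_levy_full_sigma_finite hmu.
have nu_sf := sym_levy_full_sigma_finite hnu.
split.
  rewrite -(integral_cf_var mX mX' iX lX mu_sf) -(integral_cf_var mY mY' iY lY nu_sf).
  apply: dcov2_le_integral_cf_var => //.
  - exact: measurable_cf_var mX mX' iX lX.
  - exact: measurable_cf_var mY mY' iY lY.
have ge0_phi k (Z : O -> k.-tuple R) (rho : {measure set (k.-tuple R) -> \bar R}) :
    0 <= \int[P]_w levy_phi rho (Z w).
  by apply: integral_ge0 => w _; exact: levy_phi_ge0.
apply: le_trans (lee_pmul (ge0_phi _ _ _) (ge0_phi _ _ _)
  (integral_levy_phi_vsub_le mu_sf mX mX' lX)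
  (integral_levy_phi_vsub_le nu_sf mY mY' lY)) _.
by rewrite muleACA -EFinM -natrM.
Qed.
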